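(* Let $D$ be the clover-improved Wilson Dirac operator, let $\{\mathcal{A}_1,\dots,\mathcal{A}_s\}$ be a $\Gamma_5$-compatible aggregation, let $P$ be the corresponding aggregation-based prolongation built from test vectors $v_1,\dots,v_N$ (as in the context), and let $R=(\Gamma_5P)^H$. Consider the two coarse grid operators $D_c^{PG}=RDP$ and $D_c=P^HDP$. Then: (i) $D_c=\Gamma_5^cD_c^{PG}$; (ii) $I-PD_c^{-1}P^HD=I-P(D_c^{PG})^{-1}RD$ (whenever these inverses exist); (iii) $D_c^{PG}$ is hermitian, and $D_c$ is $\Gamma_5^c$-symmetric, i.e. $(\Gamma_5^cD_c)^H=\Gamma_5^cD_c$; (iv) for the fields of values, $\mathcal{F}(D_c)\subseteq\mathcal{F}(D)$, where $\mathcal{F}(A)=\{\psi^HA\psi:\psi^H\psi=1\}$.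
   Context: Let $\mathcal{L}$ be a periodic four-dimensional $N_t\times N_s^3$ lattice with $n_{\mathcal{L}}$ sites and shift vectors $\hat\mu$ ($\mu=0,\dots,3$, spacing $a$). Let $\mathcal{C}=\{1,2,3\}$ (colors), $\mathcal{S}=\{0,1,2,3\}$ (spins), and $\mathcal{V}=\mathcal{L}\times\mathcal{C}\times\mathcal{S}$ the set of $n=12n_{\mathcal{L}}$ variables; vectors in $\mathbb{C}^n$ are fields $\psi(x)\in\mathbb{C}^4\otimes\mathbb{C}^3$. A configuration consists of $U_\mu(x)\in\mathrm{SU}(3)$. The matrices $\gamma_0,\dots,\gamma_3\in\mathbb{C}^{4\times4}$ are hermitian, unitary, with $\gamma_\mu\gamma_\nu+\gamma_\nu\gamma_\mu=2\delta_{\mu\nu}I_4$, and $\gamma_5=\gamma_0\gamma_1\gamma_2\gamma_3=\mathrm{diag}(1,1,-1,-1)$ (acting as $+1$ on spins 0,1 and $-1$ on spins 2,3). The clover-improved Wilson Dirac operator $D$ (real parameters $m_0,c_{sw}$) is $(D\psi)(x)=\Big(\tfrac{m_0+4}{a}I_{12}-\tfrac{c_{sw}}{32a}\sum_{\mu,\nu}(\gamma_\mu\gamma_\nu)\otimes(Q_{\mu\nu}(x)-Q_{\nu\mu}(x))\Big)\psi(x)-\tfrac{1}{2a}\sum_{\mu}\big((I_4-\gamma_\mu)\otimes U_\mu(x)\big)\psi(x+\hat\mu)-\tfrac{1}{2a}\sum_{\mu}\big((I_4+\gamma_\mu)\otimes U_\mu(x-\hat\mu)^H\big)\psi(x-\hat\mu)$,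 with $Q_{\mu\nu}(x)$ the sum of the four oriented plaquette products of links around $x$ in the $\mu\nu$-plane. With $\Gamma_5=I_{n_{\mathcal{L}}}\otimes\gamma_5\otimes I_3$, $D$ satisfies $(\Gamma_5D)^H=\Gamma_5D$. An aggregation is a partition $\{\mathcal{A}_1,\dots,\mathcal{A}_s\}$ of $\mathcal{V}$; it is $\Gamma_5$-compatible if each $\mathcal{A}_i$ consists exclusively of variables with spin in $\{0,1\}$ or exclusively of variables with spin in $\{2,3\}$. Given test vectors $v_1,\dots,v_N\in\mathbb{C}^n$, let $\mathcal{I}_{\mathcal{A}_i}^Tv$ denote the vector agreeing with $v$ on $\mathcal{A}_i$ and zero elsewhere. The aggregation-based prolongation $P\in\mathbb{C}^{n\times sN}$ has, for each $i$, columns $(i-1)N+1,\dots,iN$ equal to an orthonormal basis of $\mathrm{span}(\mathcal{I}_{\mathcal{A}_i}^Tv_1,\dots,\mathcal{I}_{\mathcal{A}_i}^Tv_N)$ (these restrictions being linearly independent); thus each column of $P$ is supported in a single aggregate and $P^HP=I$. $\Gamma_5^c$ is the $sN\times sN$ diagonal matrix with entry $+1$ on coarse variables belonging to aggregates of spins $\{0,1\}$ and $-1$ on those belonging to aggregates of spins $\{2,3\}$ (so that $\Gamma_5P=P\Gamma_5^c$). *)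

From HB Require Import structures.
From mathcomp Require Import all_boot all_order all_algebra.
Set Implicit Arguments. Unset Strict Implicit. Unset Printing Implicit Defensive.
Import Order.TTheory GRing.Theory Num.Theory.
Local Open Scope ring_scope.

Definition adjmx (C : numClosedFieldType) m n (A : 'M[C]_(m, n)) : 'M[C]_(n, m) :=
  \matrix_(i, j) (A j i)^*.

Definition site (Nt Ns : nat) : finType :=
  ('I_Nt * 'I_Ns * 'I_Ns * 'I_Ns)%type.

(* x + mu^ (b = true) and x - mu^ (b = false), periodically *)
Definition cshift (b : bool) n (i : 'I_n) : 'I_n := if b then ordS i else ord_pred i.

Definition lshift (b : bool) Nt Ns (mu : 'I_4) (x : site Nt Ns) : site Nt Ns :=
  let: (x0, x1, x2, x3) := x in
  match val mu with
  | 0 => (cshift b x0, x1, x2, x3)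
  | 1 => (x0, cshift b x1, x2, x3)
  | 2 => (x0, x1, cshift b x2, x3)
  | _ => (x0, x1, x2, cshift b x3)
  end.
Definition fwd Nt Ns mu x := @lshift true Nt Ns mu x.
Definition bwd Nt Ns mu x := @lshift false Nt Ns mu x.

Definition var (Nt Ns : nat) : finType := (site Nt Ns * 'I_3 * 'I_4)%type.
Definition vsite Nt Ns (p : var Nt Ns) : site Nt Ns := p.1.1.
Definition vcolor Nt Ns (p : var Nt Ns) : 'I_3 := p.1.2.
Definition vspin Nt Ns (p : var Nt Ns) : 'I_4 := p.2.

Definition gauge (C : numClosedFieldType) Nt Ns := site Nt Ns -> 'I_4 -> 'M[C]_3.

Definition SU3 (C : numClosedFieldType) (A : 'M[C]_3) : Prop :=
  adjmx A *m A = 1%:M /\ \det A = 1.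

(* Q_{mu nu}(x): sum of the four oriented plaquettes around x in the mu-nu plane *)
Definition Qclov (C : numClosedFieldType) Nt Ns (U : gauge C Nt Ns)
    (mu nu : 'I_4) (x : site Nt Ns) : 'M[C]_3 :=
  let f := @fwd Nt Ns in let b := @bwd Nt Ns in let H := @adjmx C 3 3 in
    U x mu *m U (f mu x) nu *m H (U (f nu x) mu) *m H (U x nu)
  + U x nu *m H (U (b mu (f nu x)) mu) *m H (U (b mu x) nu) *m U (b mu x) mu
  + H (U (b mu x) mu) *m H (U (b mu (b nu x)) nu) *m U (b mu (b nu x)) mu
      *m U (b nu x) nu
  + H (U (b nu x) nu) *m U (b nu x) mu *m U (f mu (b nu x)) nu *m H (U x mu).

Definition gamma5 (C : numClosedFieldType) : 'M[C]_4 :=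
  diag_mx (\row_(i < 4) (if (i < 2)%N then 1 else -1)).

Definition gamma_matrices (C : numClosedFieldType) (gam : 'I_4 -> 'M[C]_4) : Prop :=
  [/\ forall mu, adjmx (gam mu) = gam mu,
      forall mu, gam mu *m adjmx (gam mu) = 1%:M,
      forall mu nu, gam mu *m gam nu + gam nu *m gam mu = ((mu == nu)%:R *+ 2)%:M
    & gam 0 *m gam 1 *m gam 2 *m gam 3 = gamma5 C].

Definition Dker (C : numClosedFieldType) Nt Ns (gam : 'I_4 -> 'M[C]_4)
    (U : gauge C Nt Ns) (m0 csw a : C) (p q : var Nt Ns) : C :=
  let x := vsite p in let y := vsite q in
  let c := vcolor p in let c' := vcolor q in
  let s := vspin p in let s' := vspin q in
    (x == y)%:R *
      ((m0 + 4) / a * ((c == c') && (s == s'))%:R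
       - csw / (32 * a) *
         \sum_(mu < 4) \sum_(nu < 4)
            (gam mu *m gam nu) s s' * (Qclov U mu nu x - Qclov U nu mu x) c c')
  - 1 / (2 * a) * \sum_(mu < 4)
      (y == fwd mu x)%:R * (1%:M - gam mu) s s' * U x mu c c'
  - 1 / (2 * a) * \sum_(mu < 4)
      (y == bwd mu x)%:R * (1%:M + gam mu) s s' * adjmx (U (bwd mu x) mu) c c'.

Definition Dirac (C : numClosedFieldType) Nt Ns (gam : 'I_4 -> 'M[C]_4)
    (U : gauge C Nt Ns) (m0 csw a : C) : 'M[C]_#|var Nt Ns| :=
  \matrix_(i, j) Dker gam U m0 csw a (enum_val i) (enum_val j).

Definition spin_sign (C : numClosedFieldType) (s : 'I_4) : C :=
  if (s < 2)%N then 1 else -1.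

(* Gamma_5 = I_{n_L} (x) gamma_5 (x) I_3 *)
Definition Gamma5 (C : numClosedFieldType) Nt Ns : 'M[C]_#|var Nt Ns| :=
  \matrix_(i, j) ((i == j)%:R * spin_sign C (vspin (enum_val i))).

(* ---- aggregation: agg p = i  iff  variable p lies in aggregate A_i ---- *)
Definition is_aggregation Nt Ns s (agg : var Nt Ns -> 'I_s) : Prop :=
  forall i : 'I_s, exists p, agg p = i.

Definition gamma5_compatible Nt Ns s (agg : var Nt Ns -> 'I_s) : Prop :=
  forall p q, agg p = agg q -> (vspin p < 2)%N = (vspin q < 2)%N.

Definition restr (C : numClosedFieldType) Nt Ns s (agg : var Nt Ns -> 'I_s)
    (i : 'I_s) (w : 'cV[C]_#|var Nt Ns|) : 'cV[C]_#|var Nt Ns| :=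
  \col_k (if agg (enum_val k) == i then w k 0 else 0).

(* coarse variables: pairs (i, k), i-th aggregate, k-th vector of its basis *)
Definition coarse (s N : nat) : finType := ('I_s * 'I_N)%type.

Definition restr_block (C : numClosedFieldType) Nt Ns s N (agg : var Nt Ns -> 'I_s)
    (v : 'I_N -> 'cV[C]_#|var Nt Ns|) (i : 'I_s) : 'M[C]_(N, #|var Nt Ns|) :=
  \matrix_(k, j) restr agg i (v k) j 0.

Definition P_block (C : numClosedFieldType) Nt Ns s N
    (P : 'M[C]_(#|var Nt Ns|, #|coarse s N|)) (i : 'I_s) : 'M[C]_(N, #|var Nt Ns|) :=
  \matrix_(k, j) P j (enum_rank ((i, k) : coarse s N)).

Definition aggregation_prolongation (C : numClosedFieldType) Nt Ns s N
    (agg : var Nt Ns -> 'I_s) (v : 'I_N -> 'cV[C]_#|var Nt Ns|)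
    (P : 'M[C]_(#|var Nt Ns|, #|coarse s N|)) : Prop :=
  forall i : 'I_s,
    (forall k l : 'I_N,
       \sum_j (P j (enum_rank ((i, k) : coarse s N)))^* *
              P j (enum_rank ((i, l) : coarse s N)) = (k == l)%:R)
    /\ (P_block P i == restr_block agg v i)%MS.

Definition Gamma5c (C : numClosedFieldType) Nt Ns s N (agg : var Nt Ns -> 'I_s)
    : 'M[C]_#|coarse s N| :=
  \matrix_(c, d) ((c == d)%:R *
     (if [exists p, (agg p == (enum_val c).1) && (vspin p < 2)%N] then 1 else -1)).

Definition fov (C : numClosedFieldType) n (A : 'M[C]_n) : C -> Prop :=
  fun z => exists psi : 'cV[C]_n,
    (adjmx psi *m psi) 0 0 = 1 /\ z = (adjmx psi *m A *m psi) 0 0.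

From Pilot Require Import Defs.
From HB Require Import structures.
From mathcomp Require Import all_boot all_order all_algebra.
From mathcomp Require Import ring.
Set Implicit Arguments. Unset Strict Implicit. Unset Printing Implicit Defensive.
Import Order.TTheory GRing.Theory Num.Theory.
Local Open Scope ring_scope.

(* Since gamma_5 anticommutes
   with every gamma_mu, conjugation by Gamma_5 exchanges the forward and backward
   hopping terms of D exactly as the adjoint does, and it fixes the clover term,
   whose spin part is built from products gamma_mu gamma_nu; hence
   (Gamma_5 D)^H = Gamma_5 D. Gamma_5-compatibility of the aggregates gives
   Gamma_5 P = P Gamma_5^c, so R = Gamma_5^c P^H, and (i)-(iii) become identities
   between products of these matrices. For (iv) only P^H P = I is needed, which
   holds by orthonormality inside each aggregate and disjointness of supports
   across aggregates. *)

(* Instances of the rmorph lemmas that keep the [_^*] notation; rewriting with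
   rmorphM itself exposes the morphism coercion, after which [adjmx_entry] no
   longer matches. *)
Section ComplexConjugation.
Variable C : numClosedFieldType.

Lemma conjCB (x y : C) : (x - y)^* = x^* - y^*. Proof. exact: rmorphB. Qed.
Lemma conjCM (x y : C) : (x * y)^* = x^* * y^*. Proof. exact: rmorphM. Qed.
Lemma conjC_sum I (r : seq I) (P : pred I) (F : I -> C) :
  (\sum_(i <- r | P i) F i)^* = \sum_(i <- r | P i) (F i)^*.
Proof. exact: rmorph_sum. Qed.

End ComplexConjugation.

Section ConjugateTranspose.
Variable C : numClosedFieldType.

Lemma adjmxE m n (A : 'M[C]_(m, n)) : adjmx A = (map_mx Num.conj A)^T.
Proof. by apply/matrixP => i j; rewrite !mxE. Qed.

Lemma adjmxM m n p (A : 'M[C]_(m, n)) (B : 'M[C]_(n, p)) :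
  adjmx (A *m B) = adjmx B *m adjmx A.
Proof. by rewrite !adjmxE map_mxM trmx_mul. Qed.

Lemma adjmxK m n : cancel (@adjmx C m n) (@adjmx C n m).
Proof. by move=> A; apply/matrixP => i j; rewrite !mxE conjCK. Qed.

Lemma adjmxD m n (A B : 'M[C]_(m, n)) : adjmx (A + B) = adjmx A + adjmx B.
Proof. by rewrite !adjmxE map_mxD linearD. Qed.

Lemma adjmxB m n (A B : 'M[C]_(m, n)) : adjmx (A - B) = adjmx A - adjmx B.
Proof. by rewrite !adjmxE map_mxB linearB. Qed.

Lemma adjmx_entry m n (A : 'M[C]_(m, n)) i j : adjmx A i j = (A j i)^*.
Proof. by rewrite mxE. Qed.

Lemma adjmx1 n : adjmx (1%:M : 'M[C]_n) = 1%:M.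
Proof. by rewrite adjmxE map_mx1 trmx1. Qed.

End ConjugateTranspose.

Lemma invmx_mul_involution (R : comUnitRingType) m (J X : 'M[R]_m) :
  J *m J = 1%:M -> X \in unitmx -> invmx (J *m X) = invmx X *m J.
Proof.
move=> JJ unitX; have unitJX : J *m X \in unitmx.
  by rewrite unitmx_mul unitX andbT; case: (mulmx1_unit JJ).
rewrite -[RHS]mulmx1 -(mulmxV unitJX) !mulmxA -(mulmxA (invmx X)) JJ mulmx1.
by rewrite mulVmx // mul1mx.
Qed.

Section CoarseGridOperators.
Variables (C : numClosedFieldType) (n m : nat).
Variables (G : 'M[C]_n) (Gc : 'M[C]_m) (D : 'M[C]_n) (P : 'M[C]_(n, m)).
Hypotheses (G_herm : adjmx G = G) (G_invol : G *m G = 1%:M).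
Hypotheses (Gc_herm : adjmx Gc = Gc) (Gc_invol : Gc *m Gc = 1%:M).
Hypothesis D_Gherm : adjmx D = G *m D *m G.
Hypothesis GP : G *m P = P *m Gc.

Let R := adjmx (G *m P).

Lemma restrictionE : R = Gc *m adjmx P.
Proof. by rewrite /R GP adjmxM Gc_herm. Qed.

Lemma galerkinE : adjmx P *m D *m P = Gc *m (R *m D *m P).
Proof. by rewrite restrictionE !mulmxA Gc_invol mul1mx. Qed.

Lemma petrov_galerkin_herm : adjmx (R *m D *m P) = R *m D *m P.
Proof.
have RE : R = adjmx P *m G by rewrite /R adjmxM G_herm.
rewrite RE !adjmxM adjmxK G_herm D_Gherm !mulmxA.
by rewrite -[adjmx P *m G *m D *m G *m G]mulmxA G_invol mulmx1.
Qed.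

Lemma galerkin_Gsym :
  adjmx (Gc *m (adjmx P *m D *m P)) = Gc *m (adjmx P *m D *m P).
Proof. by rewrite galerkinE mulmxA Gc_invol mul1mx petrov_galerkin_herm. Qed.

Lemma coarse_correctionE : R *m D *m P \in unitmx ->
  1%:M - P *m invmx (adjmx P *m D *m P) *m adjmx P *m D
  = 1%:M - P *m invmx (R *m D *m P) *m R *m D.
Proof.
by move=> unitPG; rewrite galerkinE invmx_mul_involution // restrictionE !mulmxA.
Qed.

End CoarseGridOperators.

Lemma fov_compress (C : numClosedFieldType) n m (A : 'M[C]_n) (P : 'M[C]_(n, m)) z :
  adjmx P *m P = 1%:M -> fov (adjmx P *m A *m P) z -> fov A z.
Proof.
move=> isoP [psi [psi_unit ->]]; exists (P *m psi); split.
  by rewrite adjmxM mulmxA -[_ *m adjmx P *m P]mulmxA isoP mulmx1.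
by rewrite adjmxM !mulmxA.
Qed.

Lemma conjmx_involM (R : pzRingType) n (J A B : 'M[R]_n) :
  J *m J = 1%:M -> J *m (A *m B) *m J = (J *m A *m J) *m (J *m B *m J).
Proof. by move=> JJ; rewrite !mulmxA -(mulmxA _ J J) JJ mulmx1. Qed.

Definition sign_mx (C : numClosedFieldType) n (b : 'I_n -> bool) : 'M[C]_n :=
  \matrix_(i, j) ((i == j)%:R * (if b i then 1 else -1)).

Section SignMatrices.
Variables (C : numClosedFieldType) (n : nat) (b : 'I_n -> bool).

Lemma sign_mxE : sign_mx C b = diag_mx (\row_i (if b i then 1 else -1)).
Proof. by apply/matrixP => i j; rewrite !mxE mulr_natl. Qed.

Lemma adjmx_sign_mx : adjmx (sign_mx C b) = sign_mx C b.
Proof.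
apply/matrixP => i j; rewrite !mxE rmorphM rmorph_nat eq_sym.
case: (eqVneq i j) => [->|_]; last by rewrite !mul0r.
by rewrite !mul1r; case: (b j); rewrite ?rmorphN rmorph1.
Qed.

Lemma sign_mx_invol : sign_mx C b *m sign_mx C b = 1%:M.
Proof.
rewrite sign_mxE mul_diag_mx; apply/matrixP => i j; rewrite !mxE.
case: (eqVneq i j) => [->|_]; last by rewrite !mulr0n mulr0.
by case: (b j); rewrite !mulr1n ?mulr1 ?mulrNN ?mulr1.
Qed.

End SignMatrices.

Lemma Gamma5E (C : numClosedFieldType) Nt Ns :
  Gamma5 C Nt Ns = sign_mx C (fun i => vspin (enum_val i) < 2)%N.
Proof. by []. Qed.

Lemma Gamma5cE (C : numClosedFieldType) Nt Ns s N (agg : var Nt Ns -> 'I_s) :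
  Gamma5c C N agg =
  sign_mx C (fun c => [exists p, (agg p == (enum_val c).1) && (vspin p < 2)%N]).
Proof. by []. Qed.

Lemma commr_signM (R : pzRingType) (x y z : R) (i j : nat) :
  x * y = (-1) ^+ i * (y * x) -> x * z = (-1) ^+ j * (z * x) ->
  x * (y * z) = (-1) ^+ (i + j) * (y * z * x).
Proof.
move=> xy xz; rewrite mulrA xy -!mulrA xz !mulrA exprD -!mulrA; congr (_ * _).
by rewrite !mulrA (commr_sign y).
Qed.

Section Gamma5.
Variable C : numClosedFieldType.

Lemma gamma5E : gamma5 C = sign_mx C (fun i : 'I_4 => (i < 2)%N).
Proof. by rewrite sign_mxE. Qed.

Lemma gamma5_invol : gamma5 C *m gamma5 C = 1%:M.
Proof. by rewrite gamma5E sign_mx_invol. Qed.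

Lemma spin_sign_sq (s : 'I_4) : spin_sign C s * spin_sign C s = 1.
Proof. by rewrite /spin_sign; case: ifP; rewrite ?mulr1 ?mulrNN ?mulr1. Qed.

Lemma gamma5_conjE (M : 'M[C]_4) i j :
  (gamma5 C *m M *m gamma5 C) i j = spin_sign C i * M i j * spin_sign C j.
Proof. by rewrite /gamma5 mul_diag_mx mul_mx_diag !mxE. Qed.

End Gamma5.

Section GammaMatrices.
Variables (C : numClosedFieldType) (gam : 'I_4 -> 'M[C]_4).
Hypothesis gamP : gamma_matrices gam.

Lemma gamma_herm mu : adjmx (gam mu) = gam mu.
Proof. by case: gamP. Qed.

Lemma gamma_semicomm mu nu :
  gam mu * gam nu = (-1) ^+ (mu != nu) * (gam nu * gam mu).
Proof.
case: (eqVneq mu nu) => [->|ne]; first by rewrite mul1r.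
case: gamP => _ _ clifford _; move: (clifford mu nu); rewrite (negbTE ne).
by rewrite !mulmxE mul0rn raddf0 mulN1r => /eqP; rewrite addr_eq0 => /eqP.
Qed.

Lemma gamma5_anticomm mu : gam mu * gamma5 C = - (gamma5 C * gam mu).
Proof.
case: gamP => _ _ _ <-; rewrite !mulmxE.
(* gamma_mu commutes with one factor of gamma_0 gamma_1 gamma_2 gamma_3 and
   anticommutes with the other three. *)
have semicomm := gamma_semicomm mu.
rewrite (commr_signM (commr_signM (commr_signM (semicomm 0) (semicomm 1))
  (semicomm 2)) (semicomm 3)) -signr_odd.
have -> : odd ((mu != 0) + (mu != 1) + (mu != 2) + (mu != 3)).
  by case: mu {semicomm} => [[|[|[|[|//]]]] ?].
by rewrite expr1 mulN1r.
Qed.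

Lemma gamma5_conj_gamma mu : gamma5 C *m gam mu *m gamma5 C = - gam mu.
Proof.
by rewrite !mulmxE -mulrA gamma5_anticomm mulrN mulrA -!mulmxE gamma5_invol mul1mx.
Qed.

Lemma gamma5_conj_gamma2 mu nu :
  gamma5 C *m (gam mu *m gam nu) *m gamma5 C = gam mu *m gam nu.
Proof.
by rewrite conjmx_involM ?gamma5_invol // !gamma5_conj_gamma mulNmx mulmxN opprK.
Qed.

Lemma gamma5_conj_1Bgamma mu :
  gamma5 C *m (1%:M - gam mu) *m gamma5 C = 1%:M + gam mu.
Proof. by rewrite mulmxBr mulmxBl mulmx1 gamma5_invol gamma5_conj_gamma opprK. Qed.

Lemma gamma5_conj_1Dgamma mu :
  gamma5 C *m (1%:M + gam mu) *m gamma5 C = 1%:M - gam mu.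
Proof. by rewrite mulmxDr mulmxDl mulmx1 gamma5_invol gamma5_conj_gamma. Qed.

End GammaMatrices.

Lemma cshiftC b b' n (i : 'I_n) : cshift b (cshift b' i) = cshift b' (cshift b i).
Proof. by case: b; case: b' => //=; rewrite ?ordSK ?ord_predK. Qed.

Lemma lshiftC b b' Nt Ns mu nu (x : site Nt Ns) :
  Defs.lshift b mu (Defs.lshift b' nu x) = Defs.lshift b' nu (Defs.lshift b mu x).
Proof.
case: x => [[[x0 x1] x2] x3].
by case: mu => [[|[|[|?]]] ?]; case: nu => [[|[|[|?]]] ?] /=; rewrite ?(cshiftC b b').
Qed.

Lemma bwd_fwdC Nt Ns mu nu (x : site Nt Ns) : bwd mu (fwd nu x) = fwd nu (bwd mu x).
Proof. exact: lshiftC. Qed.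

Lemma bwdC Nt Ns mu nu (x : site Nt Ns) : bwd mu (bwd nu x) = bwd nu (bwd mu x).
Proof. exact: lshiftC. Qed.

Lemma fwdK Nt Ns mu : cancel (@fwd Nt Ns mu) (@bwd Nt Ns mu).
Proof. by case=> [[[x0 x1] x2] x3]; case: mu => [[|[|[|?]]] ?]; rewrite /= ordSK. Qed.

Lemma bwdK Nt Ns mu : cancel (@bwd Nt Ns mu) (@fwd Nt Ns mu).
Proof. by case=> [[[x0 x1] x2] x3]; case: mu => [[|[|[|?]]] ?]; rewrite /= ord_predK. Qed.

Lemma eq_fwd_bwd Nt Ns mu (x y : site Nt Ns) : (x == fwd mu y) = (y == bwd mu x).
Proof. by apply/eqP/eqP => [->|->]; rewrite ?fwdK ?bwdK. Qed.

(* The adjoint of an oriented plaquette is the reversed plaquette, one of the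
   four terms of Q_{nu mu}. *)
Lemma adjmx_Qclov (C : numClosedFieldType) Nt Ns (U : gauge C Nt Ns) mu nu x :
  adjmx (Qclov U mu nu x) = Qclov U nu mu x.
Proof.
rewrite /Qclov !adjmxD !adjmxM !adjmxK !mulmxA.
rewrite (bwd_fwdC mu nu) (bwd_fwdC nu mu) (bwdC mu nu).
by rewrite -!addrA; congr (_ + _); rewrite addrC [X in X + _]addrC -addrA.
Qed.

Section DiracGamma5Hermiticity.
Variables (C : numClosedFieldType) (Nt Ns : nat) (gam : 'I_4 -> 'M[C]_4).
Variables (U : gauge C Nt Ns) (m0 csw a : C).
Hypothesis gamP : gamma_matrices gam.
Hypotheses (m0_real : m0 \is Num.real) (csw_real : csw \is Num.real) (a_gt0 : 0 < a).

Definition clover_field (x : site Nt Ns) (c c' : 'I_3) (s s' : 'I_4) : C :=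
  \sum_(mu < 4) \sum_(nu < 4)
     (gam mu *m gam nu) s s' * (Qclov U mu nu x - Qclov U nu mu x) c c'.

Definition clover_ker (x y : site Nt Ns) (c c' : 'I_3) (s s' : 'I_4) : C :=
  (x == y)%:R * ((m0 + 4) / a * ((c == c') && (s == s'))%:R
                 - csw / (32 * a) * clover_field x c c' s s').

Definition hop_fwd (x y : site Nt Ns) (c c' : 'I_3) (s s' : 'I_4) : C :=
  \sum_(mu < 4) (y == fwd mu x)%:R * (1%:M - gam mu) s s' * U x mu c c'.

Definition hop_bwd (x y : site Nt Ns) (c c' : 'I_3) (s s' : 'I_4) : C :=
  \sum_(mu < 4) (y == bwd mu x)%:R * (1%:M + gam mu) s s' * adjmx (U (bwd mu x) mu) c c'.

Lemma DkerE p q : Dker gam U m0 csw a p q =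
  clover_ker (vsite p) (vsite q) (vcolor p) (vcolor q) (vspin p) (vspin q)
  - 1 / (2 * a) * hop_fwd (vsite p) (vsite q) (vcolor p) (vcolor q) (vspin p) (vspin q)
  - 1 / (2 * a) * hop_bwd (vsite p) (vsite q) (vcolor p) (vcolor q) (vspin p) (vspin q).
Proof. by []. Qed.

Lemma conj_clover_field x c c' s s' :
  (clover_field x c' c s' s)^* = clover_field x c c' s s'.
Proof.
rewrite /clover_field conjC_sum; under eq_bigr => mu _ do rewrite conjC_sum.
rewrite exchange_big; apply: eq_bigr => nu _; apply: eq_bigr => mu _.
by rewrite conjCM -!adjmx_entry adjmxM !gamma_herm // adjmxB !adjmx_Qclov.
Qed.

Lemma spin_conj_clover_field x c c' s s' :
  spin_sign C s * clover_field x c c' s s' * spin_sign C s' = clover_field x c c' s s'.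
Proof.
rewrite /clover_field mulr_sumr mulr_suml; apply: eq_bigr => mu _.
rewrite mulr_sumr mulr_suml; apply: eq_bigr => nu _.
by rewrite mulrA mulrAC -gamma5_conjE gamma5_conj_gamma2.
Qed.

Lemma spin_conj_delta (c c' : 'I_3) (s s' : 'I_4) :
  ((c' == c) && (s' == s))%:R
  = spin_sign C s * ((c == c') && (s == s'))%:R * spin_sign C s' :> C.
Proof.
case: (eqVneq s s') => [<-|ne]; last by rewrite !andbF mulr0 mul0r.
by rewrite !andbT (eq_sym c') mulrC mulrA spin_sign_sq mul1r.
Qed.

Let a_real : a \is Num.real := gtr0_real a_gt0.

Lemma conj_clover_ker x y c c' s s' :
  (clover_ker y x c' c s' s)^* = spin_sign C s * clover_ker x y c c' s s' * spin_sign C s'.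
Proof.
rewrite /clover_ker eq_sym; case: (eqVneq x y) => [<-|_]; last first.
  by rewrite !mul0r conjC0 mulr0 mul0r.
have mass_real : (m0 + 4) / a \is Num.real.
  by apply: rpred_div => //; apply: rpredD => //; apply: rpred_nat.
have clover_coeff_real : csw / (32 * a) \is Num.real.
  by apply: rpred_div => //; apply: rpredM => //; apply: rpred_nat.
rewrite !mul1r conjCB (conjCM ((m0 + 4) / a)) (conjCM (csw / (32 * a))).
rewrite (conj_Creal mass_real) (conj_Creal clover_coeff_real).
rewrite conjC_nat conj_clover_field.
by rewrite spin_conj_delta -{1}spin_conj_clover_field; ring.
Qed.

Lemma conj_hop_fwd x y c c' s s' :
  (hop_fwd y x c' c s' s)^* = spin_sign C s * hop_bwd x y c c' s s' * spin_sign C s'.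
Proof.
rewrite /hop_fwd /hop_bwd conjC_sum mulr_sumr mulr_suml; apply: eq_bigr => mu _.
rewrite eq_fwd_bwd; case: (eqVneq y (bwd mu x)) => [->|_]; last first.
  by rewrite !mul0r conjC0 mulr0 mul0r.
rewrite !conjCM conjC_nat -!adjmx_entry adjmxB adjmx1 gamma_herm //.
by rewrite -(gamma5_conj_1Dgamma gamP) gamma5_conjE; ring.
Qed.

Lemma conj_hop_bwd x y c c' s s' :
  (hop_bwd y x c' c s' s)^* = spin_sign C s * hop_fwd x y c c' s s' * spin_sign C s'.
Proof.
rewrite /hop_fwd /hop_bwd conjC_sum mulr_sumr mulr_suml; apply: eq_bigr => mu _.
rewrite -eq_fwd_bwd; case: (eqVneq y (fwd mu x)) => [->|_]; last first.
  by rewrite !mul0r conjC0 mulr0 mul0r.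
rewrite fwdK !conjCM conjC_nat -!adjmx_entry adjmxK adjmxD adjmx1 gamma_herm //.
by rewrite -(gamma5_conj_1Bgamma gamP) gamma5_conjE; ring.
Qed.

Lemma conj_Dker p q : (Dker gam U m0 csw a q p)^* =
  spin_sign C (vspin p) * Dker gam U m0 csw a p q * spin_sign C (vspin q).
Proof.
have hop_real : 1 / (2 * a) \is Num.real.
  by apply: rpred_div; [apply: rpred1 | apply: rpredM => //; apply: rpred_nat].
rewrite !DkerE !conjCB !(conjCM (1 / (2 * a))) (conj_Creal hop_real).
by rewrite conj_clover_ker conj_hop_fwd conj_hop_bwd; ring.
Qed.

Lemma adjmx_Dirac : adjmx (Dirac gam U m0 csw a) =
  Gamma5 C Nt Ns *m Dirac gam U m0 csw a *m Gamma5 C Nt Ns.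
Proof.
rewrite Gamma5E sign_mxE mul_diag_mx mul_mx_diag; apply/matrixP => i j.
by rewrite !mxE conj_Dker.
Qed.

End DiracGamma5Hermiticity.

Section AggregationProlongation.
Variables (C : numClosedFieldType) (Nt Ns s N : nat) (agg : var Nt Ns -> 'I_s).
Variables (v : 'I_N -> 'cV[C]_#|var Nt Ns|) (P : 'M[C]_(#|var Nt Ns|, #|coarse s N|)).
Hypothesis P_agg : aggregation_prolongation agg v P.

Lemma prolongation_support j c : P j c != 0 -> agg (enum_val j) = (enum_val c).1.
Proof.
case Ec: (enum_val c) => [i k] /=; have -> : c = enum_rank ((i, k) : coarse s N).
  by rewrite -Ec enum_valK.
have [_ /andP [/submxP [X PX] _]] := P_agg i.
move/matrixP: PX => /(_ k j); rewrite !mxE => ->.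
apply: contraNeq => ne; rewrite big1 // => l _.
by rewrite !mxE (negbTE ne) mulr0.
Qed.

Lemma prolongation_isometry : adjmx P *m P = 1%:M.
Proof.
apply/matrixP => c d; rewrite !mxE.
case Ec: (enum_val c) => [i k]; case Ed: (enum_val d) => [i' l].
have -> : c = enum_rank ((i, k) : coarse s N) by rewrite -Ec enum_valK.
have -> : d = enum_rank ((i', l) : coarse s N) by rewrite -Ed enum_valK.
rewrite (inj_eq enum_rank_inj) xpair_eqE.
case: (eqVneq i i') => [<-|ne] /=.
  by rewrite -(P_agg i).1; apply: eq_bigr => j _; rewrite mxE.
rewrite big1 // => j _; rewrite mxE.
have [->|/prolongation_support] := eqVneq (P j (enum_rank (i, k))) 0.
  by rewrite conjC0 mul0r.
have [->|/prolongation_support] := eqVneq (P j (enum_rank (i', l))) 0.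
  by rewrite mulr0.
by rewrite !enum_rankK /= => agg_i agg_i'; move: ne; rewrite -agg_i -agg_i' eqxx.
Qed.

Hypothesis agg_compatible : gamma5_compatible agg.

Lemma Gamma5_prolongation : Gamma5 C Nt Ns *m P = P *m Gamma5c C N agg.
Proof.
rewrite Gamma5E Gamma5cE !sign_mxE mul_diag_mx mul_mx_diag; apply/matrixP => j c.
rewrite !mxE; have [->|/prolongation_support Pjc] := eqVneq (P j c) 0.
  by rewrite mulr0 mul0r.
have -> : [exists p, (agg p == (enum_val c).1) && (vspin p < 2)%N]
          = (vspin (enum_val j) < 2)%N.
  apply/existsP/idP => [[p /andP [/eqP p_agg spin_p]] | spin_j].
    by rewrite -(agg_compatible (etrans p_agg (esym Pjc))).
  by exists (enum_val j); rewrite Pjc eqxx.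
exact: mulrC.
Qed.

End AggregationProlongation.

Theorem lemma3p3 (C : numClosedFieldType) (Nt Ns : nat)
    (gam : 'I_4 -> 'M[C]_4) (U : gauge C Nt Ns) (m0 csw a : C)
    (s N : nat) (agg : var Nt Ns -> 'I_s) (v : 'I_N -> 'cV[C]_#|var Nt Ns|)
    (P : 'M[C]_(#|var Nt Ns|, #|coarse s N|)) :
  (0 < Nt)%N -> (0 < Ns)%N ->
  gamma_matrices gam ->
  (forall x mu, SU3 (U x mu)) ->
  m0 \is Num.real -> csw \is Num.real -> 0 < a ->
  is_aggregation agg -> gamma5_compatible agg ->
  (forall i, row_free (restr_block agg v i)) ->
  aggregation_prolongation agg v P ->
  let D := Dirac gam U m0 csw a in
  let R := adjmx (Gamma5 C Nt Ns *m P) in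
  let DcPG := R *m D *m P in
  let Dc := adjmx P *m D *m P in
  let G5c := Gamma5c C N agg in
  [/\ Dc = G5c *m DcPG,
      Dc \in unitmx -> DcPG \in unitmx ->
        1%:M - P *m invmx Dc *m adjmx P *m D = 1%:M - P *m invmx DcPG *m R *m D,
      adjmx DcPG = DcPG /\ adjmx (G5c *m Dc) = G5c *m Dc
    & forall z, fov Dc z -> fov D z].
Proof.
move=> _ _ gamP _ m0_real csw_real a_gt0 _ compatible _ P_agg D R DcPG Dc G5c.
have G5_herm : adjmx (Gamma5 C Nt Ns) = Gamma5 C Nt Ns by apply: adjmx_sign_mx.
have G5_invol : Gamma5 C Nt Ns *m Gamma5 C Nt Ns = 1%:M by apply: sign_mx_invol.
have G5c_herm : adjmx G5c = G5c by apply: adjmx_sign_mx.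
have G5c_invol : G5c *m G5c = 1%:M by apply: sign_mx_invol.
have D_G5herm : adjmx D = Gamma5 C Nt Ns *m D *m Gamma5 C Nt Ns.
  exact: adjmx_Dirac gamP m0_real csw_real a_gt0.
have G5P := Gamma5_prolongation P_agg compatible.
split.
- by apply: galerkinE.
- by move=> _; apply: coarse_correctionE G5c_herm G5c_invol G5P.
- split; first exact: petrov_galerkin_herm G5_herm G5_invol D_G5herm.
  exact: galerkin_Gsym G5_herm G5_invol G5c_herm G5c_invol D_G5herm G5P.
- by move=> z; apply: fov_compress (prolongation_isometry P_agg).
Qed.
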